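(* Let $\mathcal{H}$ be a separable infinite-dimensional complex Hilbert space, let $T\in\mathcal{B}(\mathcal{H})$ be quasinilpotent, and let $A\in\mathcal{B}(\mathcal{H})$ commute with $T$. If $x\in\mathcal{H}$ and $Ax\neq0$, then $k_{Ax}(T)\le k_x(T)$.
   Context: For quasinilpotent $T$ and $x\neq 0$, $k_x(T)=\limsup_{\lambda\to0}\frac{\ln\|(\lambda-T)^{-1}x\|}{\ln\|(\lambda-T)^{-1}\|}$. *)

From HB Require Import structures.
From mathcomp Require Import all_boot all_order all_algebra.
From mathcomp Require Import complex.
From mathcomp Require Import all_classical all_reals all_analysis.
Set Implicit Arguments. Unset Strict Implicit. Unset Printing Implicit Defensive.
Import Order.TTheory GRing.Theory Num.Theory ComplexField.
Import numFieldNormedType.Exports.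
Local Open Scope classical_set_scope.
Local Open Scope ring_scope.

Section Hilbert.
Variables (R : realType) (H : lmodType R[i]) (ip : H -> H -> R[i]).

Definition hnorm (x : H) : R := Num.sqrt (complex.Re (ip x x)).

Definition is_inner_product : Prop :=
  [/\ forall (a : R[i]) (x y z : H), ip (a *: x + y) z = a * ip x z + ip y z,
      forall x y : H, ip y x = (ip x y)^*,
      forall x : H, 0 <= ip x x
    & forall x : H, ip x x = 0 -> x = 0].

Definition hcomplete : Prop :=
  forall u : nat -> H,
    (forall e : R, 0 < e -> exists N : nat, forall m n : nat,
        (N <= m)%N -> (N <= n)%N -> hnorm (u m - u n) < e) ->
    exists l : H, forall e : R, 0 < e -> exists N : nat, forall n : nat,
        (N <= n)%N -> hnorm (u n - l) < e.

Definition hseparable : Prop :=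
  exists d : nat -> H, forall (x : H) (e : R), 0 < e ->
    exists n : nat, hnorm (x - d n) < e.

Definition infinite_dimensional : Prop :=
  forall n : nat, exists v : 'I_n -> H, forall c : 'I_n -> R[i],
    \sum_(j < n) c j *: v j = 0 -> forall j, c j = 0.

Definition is_sep_infdim_hilbert : Prop :=
  [/\ is_inner_product, hcomplete, hseparable & infinite_dimensional].

Definition bounded_op (T : H -> H) : Prop :=
  exists M : R, forall x : H, hnorm (T x) <= M * hnorm x.

Definition opnorm (T : H -> H) : R :=
  sup [set hnorm (T x) | x in [set x : H | hnorm x <= 1]].

Definition invertible_op (S : H -> H) : Prop :=
  exists g : {linear H -> H}, [/\ bounded_op g, cancel S g & cancel g S].

Definition spectrum (T : H -> H) : set R[i] :=
  [set l | ~ invertible_op (fun x => l *: x - T x)].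

Definition quasinilpotent (T : H -> H) : Prop := spectrum T = [set 0].

(* resolvent (l - T)^{-1}, defined pointwise as the (unique, when l is not in
   the spectrum) preimage of x under l - T *)
Definition resolvent (T : H -> H) (l : R[i]) (x : H) : H :=
  xget 0 [set y : H | l *: y - T y = x].

Definition kx (T : H -> H) (x : H) : \bar R :=
  limf_esup (fun l : R[i]^o =>
    (ln (hnorm (resolvent T l x)) / ln (opnorm (resolvent T l)))%:E)
    (dnbhs (0 : R[i]^o)).

End Hilbert.

From HB Require Import structures.
From mathcomp Require Import all_boot all_order all_algebra.
From mathcomp Require Import complex.
From mathcomp Require Import all_classical all_reals all_analysis.
From mathcomp Require Import ring lra.

(* Since A commutes with T, it commutes with every resolvent (l - T)^-1, so
   ln ||(l - T)^-1 A x|| <= ln ||A|| + ln ||(l - T)^-1 x||.  The constant ln ||A||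
   disappears after division by ln ||(l - T)^-1||, because ||(l - T)^-1|| tends
   to +oo as l -> 0: a bound ||(l - T)^-1|| <= K along a sequence l -> 0 would
   make T bounded below by 1/(2K) with dense range, hence (H being complete)
   invertible, contradicting 0 in the spectrum of T. *)

Set Implicit Arguments.
Unset Strict Implicit.
Unset Printing Implicit Defensive.

Import Order.TTheory GRing.Theory Num.Theory ComplexField.
Local Open Scope ring_scope.
Local Open Scope complex_scope.
Local Open Scope classical_set_scope.

Lemma limf_esup_le_add (R : realType) (T : choiceType) (X : filteredType T)
    (F : set_system X) (f g : X -> \bar R) : Filter F ->
  (forall e : R, 0 < e -> \forall t \near F, (f t <= g t + e%:E)%E) ->
  (limf_esup f F <= limf_esup g F)%E.
Proof.
move=> FF fg; apply: le_ereal_inf_tmp => _ [V FV <-].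
apply/lee_addgt0Pr => e e0; apply: ereal_inf_le.
pose W := [set t : X | (f t <= g t + e%:E)%E].
exists (ereal_sup (f @` (V `&` W))); first by exists (V `&` W) => //; exact: filterI (fg e e0).
apply: ge_ereal_sup => _ [t [Vt /= fgt] <-]; apply: (le_trans fgt).
by apply: leeD2r; apply: ereal_sup_ubound; exists t.
Qed.

Lemma ln_ratio_le_add (R : realType) (a b c e X : R) :
  0 < e -> 0 <= c -> a <= c + b -> expR (c / e) < X ->
  a / ln X <= b / ln X + e.
Proof.
move=> e0 c0 abc cX; have X0 : 0 < X := lt_trans (expR_gt0 _) cX.
have cL : c / e < ln X by rewrite -ltr_expR lnK.
have L0 : 0 < ln X := le_lt_trans (divr_ge0 c0 (ltW e0)) cL.
rewrite -[e](mulfK (lt0r_neq0 L0)) -mulrDl ler_wpM2r ?invr_ge0 ?(ltW L0) //.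
by move: cL; rewrite ltr_pdivrMr // mulrC; lra.
Qed.

Section ShiftedOperator.
Variables (R : realType) (H : lmodType R[i]) (T : {linear H -> H}).

Definition lsubT (l : R[i]) (y : H) : H := l *: y - T y.

Lemma lsubT_linear l : linear (lsubT l).
Proof.
by move=> a u v; rewrite /lsubT linearP scalerDr scalerBr !scalerA mulrC opprD addrACA.
Qed.

HB.instance Definition _ l :=
  GRing.isLinear.Build R[i] H H *:%R (lsubT l) (lsubT_linear l).

Lemma lsubT0 y : lsubT 0 y = - T y.
Proof. by rewrite /lsubT scale0r add0r. Qed.

Lemma lsubTE l y : lsubT l y = l *: y + lsubT 0 y.
Proof. by rewrite lsubT0. Qed.

Lemma lsubT_comm (A : {linear H -> H}) l y :
  (forall y, A (T y) = T (A y)) -> lsubT l (A y) = A (lsubT l y).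
Proof. by move=> AT; rewrite /lsubT linearB linearZ AT. Qed.

End ShiftedOperator.

Section InnerProductSpace.
Variables (R : realType) (H : lmodType R[i]) (ip : H -> H -> R[i]).
Hypothesis hip : is_inner_product ip.

Local Notation "`| x |_H" := (hnorm ip x) (format "`| x |_H").
Local Notation B x y := (complex.Re (ip x y)).

Let ipPl a x y z : ip (a *: x + y) z = a * ip x z + ip y z.
Proof. by case: hip => h _ _ _; apply: h. Qed.

Let ipC x y : ip y x = (ip x y)^*.
Proof. by case: hip => _ h _ _; apply: h. Qed.

Let ip_ge0 x : 0 <= ip x x.
Proof. by case: hip => _ _ h _; apply: h. Qed.

Let ip_eq0 x : ip x x = 0 -> x = 0.
Proof. by case: hip => _ _ _; apply. Qed.

Lemma ip0l z : ip 0 z = 0.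
Proof.
have := ipPl 1 0 0 z; rewrite scale1r addr0 mul1r.
by move/(congr1 (fun t => t - ip 0 z)); rewrite subrr addrK.
Qed.

Lemma ipZl a x z : ip (a *: x) z = a * ip x z.
Proof. by rewrite -[_ *: _]addr0 ipPl ip0l addr0. Qed.

Lemma ipDl x y z : ip (x + y) z = ip x z + ip y z.
Proof. by have := ipPl 1 x y z; rewrite scale1r mul1r. Qed.

Lemma conj_ipxx x : (ip x x)^* = ip x x.
Proof. by rewrite -ipC. Qed.

Lemma Re_ipC x y : B y x = B x y.
Proof. by rewrite ipC; case: (ip x y). Qed.

Lemma Re_ipxx_ge0 x : 0 <= B x x.
Proof. by have := ip_ge0 x; rewrite lecE => /andP[]. Qed.

Lemma hnorm_sqr x : `|x|_H ^+ 2 = B x x.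
Proof. exact/sqr_sqrtr/Re_ipxx_ge0. Qed.

Lemma hnorm_ge0 x : 0 <= `|x|_H.
Proof. exact: sqrtr_ge0. Qed.

Lemma hnorm_eq0 x : `|x|_H = 0 -> x = 0.
Proof.
move=> x0; apply: ip_eq0; have := ip_ge0 x; rewrite lecE => /andP[/eqP Im0 _].
by apply/eqP; rewrite eq_complex /= Im0 -hnorm_sqr x0 expr0n !eqxx.
Qed.

Lemma hnorm_gt0 x : x != 0 -> 0 < `|x|_H.
Proof. by move=> x0; rewrite lt0r hnorm_ge0 andbT; apply: contra_neq x0 => /hnorm_eq0. Qed.

Lemma hnorm0 : `|0|_H = 0.
Proof. by rewrite /hnorm ip0l sqrtr0. Qed.

Lemma normcE (a : R[i]) : `|a| = (Normc.normc a)%:C.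
Proof. by case: a. Qed.

Lemma normc_ge0 (a : R[i]) : 0 <= Normc.normc a.
Proof. by case: a => u v; apply: sqrtr_ge0. Qed.

Lemma normcR (t : R) : Normc.normc t%:C = `|t|.
Proof. by rewrite /= expr0n addr0 sqrtr_sqr. Qed.

Lemma Re_mulcR (t : R) (w : R[i]) : complex.Re (t%:C * w) = t * complex.Re w.
Proof. by case: w => u v /=; rewrite mul0r subr0. Qed.

Lemma hnormZ a x : `|a *: x|_H = Normc.normc a * `|x|_H.
Proof.
have aa : a * a^* = (Normc.normc a ^+ 2)%:C by rewrite -sqr_normc normcE rmorphXn.
rewrite /hnorm ipZl ipC ipZl rmorphM /= conj_ipxx mulrA aa Re_mulcR.
by rewrite sqrtrM ?sqr_ge0 // sqrtr_sqr ger0_norm ?normc_ge0.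
Qed.

Lemma Re_ipDl x y z : B (x + y) z = B x z + B y z.
Proof. by rewrite ipDl; case: (ip x z); case: (ip y z). Qed.

Lemma Re_ipZl (t : R) x z : B (t%:C *: x) z = t * B x z.
Proof. by rewrite ipZl Re_mulcR. Qed.

Lemma hnorm_lincomb_sqr (s t : R) x y :
  `|s%:C *: x + t%:C *: y|_H ^+ 2 =
    s ^+ 2 * `|x|_H ^+ 2 + 2 * s * t * B x y + t ^+ 2 * `|y|_H ^+ 2.
Proof.
rewrite !hnorm_sqr Re_ipDl !Re_ipZl ![B _ (_ + _)]Re_ipC !Re_ipDl !Re_ipZl.
rewrite (Re_ipC x y); lra.
Qed.

Lemma Re_ip_le_hnorm x y : B x y <= `|x|_H * `|y|_H.
Proof.
have [->|x0] := eqVneq x 0; first by rewrite ip0l hnorm0 mul0r.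
have [->|y0] := eqVneq y 0; first by rewrite -Re_ipC ip0l hnorm0 mulr0.
have := sqr_ge0 `|(`|y|_H)%:C *: x + (- `|x|_H)%:C *: y|_H.
rewrite hnorm_lincomb_sqr.
have := mulr_gt0 (hnorm_gt0 x0) (hnorm_gt0 y0); nra.
Qed.

Lemma hnormD x y : `|x + y|_H <= `|x|_H + `|y|_H.
Proof.
rewrite -(@ler_pXn2r _ 2) ?nnegrE ?addr_ge0 ?hnorm_ge0 //.
have := hnorm_lincomb_sqr 1 1 x y; rewrite !scale1r => ->.
have := Re_ip_le_hnorm x y; lra.
Qed.

Lemma hnormN x : `|- x|_H = `|x|_H.
Proof. by rewrite -scaleN1r hnormZ normcN Normc.normc1 mul1r. Qed.

Lemma hnormB x y : `|x - y|_H = `|y - x|_H.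
Proof. by rewrite -hnormN opprB. Qed.

Lemma hnorm_sub_le x y z : `|x - z|_H <= `|x - y|_H + `|y - z|_H.
Proof. by rewrite -[x - z](subrKA y) hnormD. Qed.

Lemma bounded_op_ge1 (S : H -> H) : bounded_op ip S ->
  exists2 M, 1 <= M & forall w, `|S w|_H <= M * `|w|_H.
Proof.
case=> M SM; exists (`|M| + 1) => [|w]; first by rewrite lerDr.
apply: (le_trans (SM w)); rewrite ler_wpM2r ?hnorm_ge0 //.
by rewrite (le_trans (ler_norm _)) ?lerDl.
Qed.

Lemma hnorm_le_opnorm (S : {linear H -> H}) z : bounded_op ip S ->
  `|S z|_H <= opnorm ip S * `|z|_H.
Proof.
move=> /bounded_op_ge1[M M1 SM].
have [->|z0] := eqVneq z 0; first by rewrite linear0 hnorm0 mulr0.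
have ub : has_ubound [set `|S u|_H | u in [set u | `|u|_H <= 1]].
  by exists M => _ [u u1 <-]; rewrite (le_trans (SM u)) ?ler_piMr ?(le_trans ler01).
have z_gt0 := hnorm_gt0 z0.
have zn : [set u | `|u|_H <= 1] (((`|z|_H)^-1)%:C *: z).
  by rewrite /= hnormZ normcR ger0_norm ?invr_ge0 ?hnorm_ge0 // mulVf // gt_eqF.
have := ub_le_sup ub (ex_intro2 _ _ _ zn erefl).
by rewrite linearZ hnormZ normcR ger0_norm ?invr_ge0 ?hnorm_ge0 // mulrC ler_pdivrMr.
Qed.

Lemma invertible_of_bounded_below (S : {linear H -> H}) (c : R) :
  (forall y, `|y|_H <= c * `|S y|_H) -> (forall z, exists y, S y = z) ->
  invertible_op ip S.
Proof.
move=> below surj; pose g z := xget 0 [set y | S y = z].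
have gK : cancel g S by move=> z; exact: (xgetPex 0 (surj z)).
have S_inj : injective S.
  move=> u v /eqP; rewrite -subr_eq0 -linearB => /eqP uv; apply/eqP.
  rewrite -subr_eq0; apply/eqP/hnorm_eq0/eqP.
  by rewrite eq_le hnorm_ge0 andbT (le_trans (below _)) // uv hnorm0 mulr0.
have g_linear : linear g by move=> a u v; apply: S_inj; rewrite linearP !gK.
pose G : {linear H -> H} := HB.pack g (GRing.isLinear.Build _ _ _ _ g g_linear).
exists G; split=> [|y|//]; last by apply: S_inj; rewrite gK.
by exists c => z; rewrite (le_trans (below _)) //= gK.
Qed.

Lemma exists_invS_lt (e : R) : 0 < e ->
  exists N, forall n, (N <= n)%N -> n.+1%:R^-1 < e.
Proof. by move=> e0; case: (near_infty_natSinv_lt (PosNum e0)) => N _ /= hN; exists N. Qed.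

Lemma surjective_of_bounded_below_dense (S : {linear H -> H}) (c : R) :
  hcomplete ip -> bounded_op ip S -> 0 < c ->
  (forall y, `|y|_H <= c * `|S y|_H) ->
  (forall z e, 0 < e -> exists y, `|S y - z|_H < e) ->
  forall z, exists y, S y = z.
Proof.
move=> hc /bounded_op_ge1[M M1 SM] c0 below dense z.
have /choice[y Syz] n : exists y, `|S y - z|_H < n.+1%:R^-1 by apply: dense.
have [l yl] : exists l, forall e, 0 < e -> exists N, forall n, (N <= n)%N -> `|y n - l|_H < e.
  apply: hc => e e0; rewrite -(mulVKf (lt0r_neq0 c0) e).
  have ce0 : 0 < c^-1 * e / 2 by rewrite !mulr_gt0 ?invr_gt0.
  have [N HN] := exists_invS_lt ce0.
  exists N => m n Nm Nn; apply: (le_lt_trans (below _)); rewrite ltr_pM2l //.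
  rewrite linearB (le_lt_trans (hnorm_sub_le _ z _)) // [`|z - _|_H]hnormB.
  by rewrite [_ * e]splitr ltrD // (lt_trans (Syz _)) // HN.
exists l; apply/eqP; rewrite -subr_eq0; apply/eqP/hnorm_eq0/eqP.
rewrite eq_le hnorm_ge0 andbT; apply/ler_addgt0Pr => e e0; rewrite add0r.
have M0 : 0 < M := lt_le_trans ltr01 M1.
have [N1 HN1] := yl _ (divr_gt0 (divr_gt0 e0 (ltr0Sn _ 1)) M0).
have [N2 HN2] := exists_invS_lt (divr_gt0 e0 (ltr0Sn _ 1)).
pose n := maxn N1 N2; rewrite (le_trans (hnorm_sub_le _ (S (y n)) _)) // [e]splitr lerD //.
  rewrite -linearB (le_trans (SM _)) // hnormB -ler_pdivlMl // mulrC.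
  exact/ltW/HN1/leq_maxl.
exact/ltW/(lt_trans (Syz n))/HN2/leq_maxr.
Qed.

Section Resolvent.
Variable T : {linear H -> H}.

Lemma resolvent_inverse l (g : H -> H) :
  cancel (lsubT T l) g -> cancel g (lsubT T l) -> resolvent T l = g.
Proof.
move=> gK Kg; apply/funext => z; apply: xget_unique; first exact: Kg.
by move=> y <-; rewrite [RHS]gK.
Qed.

Section Invertible.
Variable l : R[i].
Hypothesis Tl : invertible_op ip (lsubT T l).

Lemma resolventK : cancel (resolvent T l) (lsubT T l).
Proof. by case: Tl => g [_ gK Kg]; rewrite (resolvent_inverse gK Kg). Qed.

Lemma lsubTK : cancel (lsubT T l) (resolvent T l).
Proof. by case: Tl => g [_ gK Kg]; rewrite (resolvent_inverse gK Kg). Qed.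

Lemma hnorm_resolvent_le z :
  `|resolvent T l z|_H <= opnorm ip (resolvent T l) * `|z|_H.
Proof.
by case: Tl => g [gb gK Kg]; rewrite (resolvent_inverse gK Kg) hnorm_le_opnorm.
Qed.

Lemma resolvent_neq0 x : x != 0 -> resolvent T l x != 0.
Proof. by apply: contra_neq => Rx0; rewrite -[x]resolventK Rx0 linear0. Qed.

Lemma resolvent_comm (A : {linear H -> H}) x :
  (forall y, A (T y) = T (A y)) -> resolvent T l (A x) = A (resolvent T l x).
Proof. by move=> AT; apply: (can_inj lsubTK); rewrite resolventK lsubT_comm // resolventK. Qed.

Lemma ln_resolvent_comm_le (A : {linear H -> H}) (M : R) x :
  0 < M -> (forall w, `|A w|_H <= M * `|w|_H) ->
  (forall y, A (T y) = T (A y)) -> A x != 0 ->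
  ln `|resolvent T l (A x)|_H <= ln M + ln `|resolvent T l x|_H.
Proof.
move=> M0 AM AT Ax0; have x0 : x != 0 by apply: contra_neq Ax0 => ->; rewrite linear0.
rewrite -lnM ?posrE ?hnorm_gt0 ?resolvent_neq0 //.
by rewrite ler_ln ?posrE ?mulr_gt0 ?hnorm_gt0 ?resolvent_neq0 // resolvent_comm.
Qed.

End Invertible.

Section Quasinilpotent.
Hypotheses (hc : hcomplete ip) (hT : bounded_op ip T) (qT : quasinilpotent ip T).

Lemma invertible_lsubT l : l != 0 -> invertible_op ip (lsubT T l).
Proof.
move=> l0; apply: contrapT => Tl; have : spectrum ip T l by [].
by rewrite qT => /= l0'; rewrite l0' eqxx in l0.
Qed.

Lemma not_invertible_lsubT0 : ~ invertible_op ip (lsubT T 0).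
Proof. by have : spectrum ip T 0 by rewrite qT. Qed.

Lemma invertible_lsubT0_of_bounded_resolvents (K : R) : 0 < K ->
  (forall d, 0 < d -> exists l, [/\ l != 0, Normc.normc l < d &
                                   opnorm ip (resolvent T l) <= K]) ->
  invertible_op ip (lsubT T 0).
Proof.
move=> K0 small.
have {}small d : 0 < d -> exists l, [/\ invertible_op ip (lsubT T l),
    Normc.normc l < d & forall z, `|resolvent T l z|_H <= K * `|z|_H].
  move=> /small[l [l0 ld lK]]; have Tl := invertible_lsubT l0.
  exists l; split=> // z; rewrite (le_trans (hnorm_resolvent_le Tl z)) //.
  by rewrite ler_wpM2r ?hnorm_ge0.
have below y : `|y|_H <= (2 * K) * `|lsubT T 0 y|_H.
  have K2 : 0 < (2 * K)^-1 by rewrite invr_gt0 mulr_gt0.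
  have [l [Tl l_small RK]] := small _ K2.
  have y_le : `|y|_H <= K * Normc.normc l * `|y|_H + K * `|lsubT T 0 y|_H.
    rewrite -{1}(lsubTK Tl y) (le_trans (RK _)) // -mulrA -mulrDr -hnormZ lsubTE.
    by rewrite ler_wpM2l ?hnormD ?ltW.
  have : K * Normc.normc l * `|y|_H <= 2^-1 * `|y|_H.
    rewrite ler_wpM2r ?hnorm_ge0 // -ler_pdivlMl // (le_trans (ltW l_small)) //.
    by rewrite invfM mulrC.
  lra.
have dense z e : 0 < e -> exists y, `|lsubT T 0 y - z|_H < e.
  move=> e0; have zK0 : 0 < K * (`|z|_H + 1) by rewrite mulr_gt0 // ltr_wpDl ?hnorm_ge0.
  have [l [Tl l_small RK]] := small (e / (K * (`|z|_H + 1))) (divr_gt0 e0 zK0).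
  (* -T (l - T)^-1 z - z = - l (l - T)^-1 z *)
  exists (resolvent T l z); rewrite -{2}(resolventK Tl z) [X in _ - X]lsubTE opprD addrCA subrr addr0.
  rewrite hnormN hnormZ (le_lt_trans (ler_wpM2l (normc_ge0 _) (RK z))) //.
  have Kz : K * `|z|_H <= K * (`|z|_H + 1) by rewrite ler_wpM2l ?lerDl ?ltW.
  by rewrite (le_lt_trans (ler_wpM2l (normc_ge0 _) Kz)) // -ltr_pdivlMr.
have T0b : bounded_op ip (lsubT T 0).
  by case: hT => M TM; exists M => y; rewrite lsubT0 hnormN.
have K20 : 0 < 2 * K by rewrite mulr_gt0.
exact: invertible_of_bounded_below below
  (surjective_of_bounded_below_dense hc T0b K20 below dense).
Qed.

Lemma opnorm_resolvent_cvgy :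
  opnorm ip (resolvent T l) @[l --> (0 : R[i]^o)^'] --> +oo.
Proof.
apply/cvgryPgt => K; apply: contrapT => notK; apply: not_invertible_lsubT0.
apply: (@invertible_lsubT0_of_bounded_resolvents (Num.max K 1)) => [|d d0].
  by rewrite lt_max ltr01 orbT.
apply: contrapT => no_l; apply: notK.
apply/nbhs_ballP; exists d%:C => /=; first by rewrite ltcR.
move=> l; rewrite -ball_normE /= sub0r normrN normcE ltcR => ld l0.
rewrite ltNge; apply: contra_notN no_l => lK; exists l; split=> //.
by rewrite (le_trans lK) ?le_max ?lexx.
Qed.

End Quasinilpotent.
End Resolvent.

End InnerProductSpace.

Theorem lemma4p7 (R : realType) (H : lmodType R[i]) (ip : H -> H -> R[i])
  (hH : is_sep_infdim_hilbert ip)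
  (T A : {linear H -> H})
  (hT : bounded_op ip T) (hA : bounded_op ip A)
  (qT : quasinilpotent ip T)
  (hAT : forall y : H, A (T y) = T (A y))
  (x : H) (hAx : A x != 0) :
  (kx ip T (A x) <= kx ip T x)%E.
Proof.
case: hH => hip hc _ _.
have [M M1 AM] := bounded_op_ge1 hA.
apply: limf_esup_le_add => e e0.
have big := cvgry_gt (opnorm_resolvent_cvgy hip hc hT qT) (expR (ln M / e)).
near=> l.
rewrite -EFinD lee_fin; apply: ln_ratio_le_add e0 (ln_ge0 M1) _ _; last by near: l; apply: big.
apply: (ln_resolvent_comm_le hip) (lt_le_trans ltr01 M1) AM hAT hAx.
apply: invertible_lsubT => //; near: l; exact: nbhs_dnbhs_neq.
Unshelve. all: by end_near.
Qed.
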